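(* Let $a\in\mathbb{R}$, $\sigma>0$, $\gamma>0$, $\lambda>0$, $T\ge1$, channel transition probabilities $p_{cc'}$, and let $V_t$, $t=0,\ldots,T$, be defined on $\mathbb{R}\times\{0,1\}$ by the value iteration in the context. Then for each $c\in\{0,1\}$ and $t\in\{0,1,\ldots,T\}$, $V_t(\Delta,c)$ depends on $\Delta$ only through $|\Delta|$ and is non-decreasing in $|\Delta|$.
   Context: $p_{01},p_{10}\in[0,1]$, $p_{00}=1-p_{01}$, $p_{11}=1-p_{10}$; $\psi(v)=e^{-v^2/(2\sigma^2)}$. Value iteration (for minimizing $\mathbb{E}\exp(\gamma\sum_t(\lambda u(t)+(1-u(t)c(t))\Delta(t)^2))$ for an estimation error $\Delta$ over a two-state Markov channel): $V_0\equiv1$, $Q_{t+1}(\Delta,c;0)=e^{\gamma\Delta^2}\sum_{c_+\in\{0,1\}}p_{cc_+}\int_{\mathbb{R}}\psi(\Delta_+-a\Delta)V_t(\Delta_+,c_+)d\Delta_+$, $Q_{t+1}(\Delta,c;1)=(1-c)e^{\gamma(\lambda+\Delta^2)}\sum_{c_+}p_{cc_+}\int_{\mathbb{R}}\psi(\Delta_+-a\Delta)V_t(\Delta_+,c_+)d\Delta_++c\,e^{\gamma\lambda}\sum_{c_+}p_{cc_+}\int_{\mathbb{R}}\psi(\Delta_+)V_t(\Delta_+,c_+)d\Delta_+$, $V_{t+1}(\Delta,c)=\min_{u\in\{0,1\}}Q_{t+1}(\Delta,c;u)$. *)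

From HB Require Import structures.
From mathcomp Require Import all_boot all_order all_algebra.
From mathcomp Require Import all_classical all_reals all_analysis.
Set Implicit Arguments. Unset Strict Implicit. Unset Printing Implicit Defensive.
Import Order.TTheory GRing.Theory Num.Theory.
Local Open Scope ring_scope.
Local Open Scope ereal_scope.

Section ValueIteration.
Variable R : realType.

Definition psi (sigma v : R) : R := expR (- (v ^+ 2) / (2 * sigma ^+ 2))%R.

(* channel transition probabilities; state 1 is encoded as true, 0 as false *)
Definition ptrans (p01 p10 : R) (c c' : bool) : R :=
  match c, c' with
  | false, false => (1 - p01)%R
  | false, true => p01
  | true, false => p10
  | true, true => (1 - p10)%R
  end.

Definition expect (sigma p01 p10 : R) (W : R -> bool -> \bar R) (m : R) (c : bool)
  : \bar R :=
  (ptrans p01 p10 c false)%:E *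
     \int[lebesgue_measure]_(x in [set: R]) ((psi sigma (x - m))%:E * W x false)
  + (ptrans p01 p10 c true)%:E *
     \int[lebesgue_measure]_(x in [set: R]) ((psi sigma (x - m))%:E * W x true).

Definition Q0 (a sigma gamma p01 p10 : R) (W : R -> bool -> \bar R)
  (d : R) (c : bool) : \bar R :=
  (expR (gamma * d ^+ 2))%:E * expect sigma p01 p10 W (a * d) c.

(* (1-c) e^{gamma(lambda+d^2)} ... + c e^{gamma lambda} ..., written by cases on c *)
Definition Q1 (a sigma gamma lambda p01 p10 : R) (W : R -> bool -> \bar R)
  (d : R) (c : bool) : \bar R :=
  if c then (expR (gamma * lambda))%:E * expect sigma p01 p10 W 0 c
  else (expR (gamma * (lambda + d ^+ 2)))%:E * expect sigma p01 p10 W (a * d) c.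

Definition Vstep (a sigma gamma lambda p01 p10 : R) (W : R -> bool -> \bar R)
  : R -> bool -> \bar R :=
  fun d c => mine (Q0 a sigma gamma p01 p10 W d c)
                  (Q1 a sigma gamma lambda p01 p10 W d c).

Fixpoint V (a sigma gamma lambda p01 p10 : R) (t : nat) : R -> bool -> \bar R :=
  match t with
  | O => fun _ _ => 1
  | S t' => Vstep a sigma gamma lambda p01 p10 (V a sigma gamma lambda p01 p10 t')
  end.

End ValueIteration.

From mathcomp Require Import all_boot all_order all_algebra.
From mathcomp Require Import all_classical all_reals all_analysis.
From mathcomp Require Import measurable_realfun lra ring.
Import Order.TTheory GRing.Theory Num.Theory.
Local Open Scope ring_scope.
Local Open Scope classical_set_scope.
Local Open Scope ereal_scope.

(* The value functions stay nonnegative and nondecreasing in |d| because the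
   only non-elementary step of the iteration, h |-> (m |-> \int psi (x - m) h x dx),
   preserves this. The result is even in m (substitute x |-> -x); and for
   m1 <= m2 with m1 + m2 >= 0, the reflection x |-> m1 + m2 - x swaps the two
   kernel centres, so pairing each x < (m1 + m2) / 2 with its mirror image, where
   psi (x - m1) >= psi (x - m2) and h x <= h (m1 + m2 - x), reduces the comparison
   to the two-term rearrangement inequality. The remaining factors exp (gamma d^2)
   and |a d| are monotone in |d|, and min preserves monotonicity. *)

Section reflection.
Context {R : realType}.
Local Notation mu := (@lebesgue_measure R).

Lemma measurable_subr (k : R) :
  measurable_fun [set: measurableTypeR R]
    ((fun x : R => k - x)%R : measurableTypeR R -> measurableTypeR R).
Proof. by apply: measurable_funD => //; exact: measurableT_comp. Qed.

Lemma lebesgue_measure_subr (k : R) (A : set R) : measurable A ->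
  pushforward mu (fun x : R => (k - x)%R : measurableTypeR R) A = mu A.
Proof.
move=> mA; apply/esym/lebesgue_measure_unique => //=; first exact: measurable_subr.
move=> _ _ [[a b]] _ <-; rewrite /pushforward.
have -> : (fun x : R => k - x)%R @^-1` `]a, b] = `[(k - b)%R, (k - a)%R[.
  by apply/seteqP; split => x /=; rewrite !in_itv /= => /andP[? ?];
    apply/andP; split; lra.
rewrite !lebesgue_measure_itv /= !lte_fin ltrD2l ltrN2.
by case: ifP => // _; rewrite -!EFinD; congr EFin; lra.
Qed.

Variable g : R -> \bar R.
Hypothesis mg : measurable_fun [set: R] g.
Hypothesis g_ge0 : forall x, 0 <= g x.

Lemma ge0_integral_subr (k : R) (D : set R) : measurable D ->
  \int[mu]_(x in D) g x = \int[mu]_(x in (fun x => k - x)%R @^-1` D) g (k - x)%R.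
Proof.
move=> mD.
have := @ge0_integral_pushforward _ _ _ _ _ _ (measurable_subr k) lebesgue_measure D g mD.
rewrite /comp => <- //; last exact: measurable_funS mg.
apply: eq_measure_integral; first exact: measurable_subr.
by move=> mf A mA _; symmetry; exact: lebesgue_measure_subr.
Qed.

Lemma ge0_integral_fold (k : R) : \int[mu]_(x in [set: R]) g x =
  \int[mu]_(x in `]-oo, (k / 2)%R[) (g x + g (k - x)%R).
Proof.
have mgk : measurable_fun [set: R] (fun x => g (k - x)%R).
  exact: measurableT_comp mg (measurable_subr k).
have -> : [set: R] = `]-oo, (k / 2)%R[ `|` `[(k / 2)%R, +oo[.
  apply/seteqP; split => x // _ /=; rewrite !in_itv /= andbT.
  by have [xc|xc] := ltP x (k / 2)%R; [left|right].
rewrite ge0_integral_setU //=; first last.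
- by apply/disj_setPS => x [] /=; rewrite !in_itv /= andbT; lra.
- exact: measurable_funS mg.
rewrite (@ge0_integral_subr k `[(k / 2)%R, +oo[) //.
have -> : (fun x => k - x)%R @^-1` `[(k / 2)%R, +oo[ = `]-oo, (k / 2)%R].
  by apply/seteqP; split => x /=; rewrite !in_itv /= !andbT; lra.
rewrite -integral_itv_bndo_bndc; last exact: measurable_funS mgk.
by rewrite ge0_integralD //; [exact: measurable_funS mg|exact: measurable_funS mgk].
Qed.

End reflection.

Lemma ge0_le_integral_fold {R : realType} (k : R) (f g : R -> \bar R) :
  measurable_fun [set: R] f -> (forall x, 0 <= f x) ->
  measurable_fun [set: R] g -> (forall x, 0 <= g x) ->
  (forall x, (x < k / 2)%R -> f x + f (k - x)%R <= g x + g (k - x)%R) ->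
  \int[lebesgue_measure]_(x in [set: R]) f x <=
  \int[lebesgue_measure]_(x in [set: R]) g x.
Proof.
move=> mf f0 mg g0 fg; rewrite (ge0_integral_fold _ mf f0 k) (ge0_integral_fold _ mg g0 k).
have mfold e D : measurable_fun [set: R] e ->
    measurable_fun D (fun x => e x + e (k - x)%R).
  move=> me; apply: measurable_funS (emeasurable_funD me _) => //.
  exact: measurableT_comp me (measurable_subr k).
apply: ge0_le_integral => //.
- by move=> x _; rewrite adde_ge0.
- by apply: mfold.
- by apply: mfold.
Qed.

Definition abs_nondecreasing {R : realType} (h : R -> \bar R) :=
  {homo h : x y / (`|x| <= `|y|)%R >-> x <= y}.

Lemma measurable_abs_nondecreasing {R : realType} (h : R -> \bar R) :
  abs_nondecreasing h -> measurable_fun [set: R] h.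
Proof.
move=> hm; apply: (measurability _ (ErealGenCInfty.measurableE R)) => //.
move=> _ [_ [r ->] <-]; rewrite setTI.
set S := h @^-1` _.
have -> : S = (S `&` [set x | 0 <= x]%R) `|` (S `&` [set x | x <= 0]%R).
  apply/seteqP; split => [x Sx|x]; last by case=> -[].
  by have [x0|x0] := leP 0%R x; [left|right; split => //; exact: ltW].
have Sx_le x y : S x -> (`|x| <= `|y|)%R -> S y.
  by rewrite /S /= !in_itv /= !andbT => Sx /hm; exact: le_trans.
apply: measurableU; apply: is_interval_measurable.
- move=> x y [Sx x0] _ z /andP[xz _]; split; last exact: le_trans xz.
  by apply: Sx_le Sx _; rewrite !ger0_norm //; exact: le_trans xz.
- move=> x y _ [Sy y0] z /andP[_ zy]; split; last exact: le_trans zy _.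
  by apply: Sx_le Sy _; rewrite !ler0_norm ?lerN2 //; exact: le_trans zy _.
Qed.

Lemma leeD_rearrange {R : realType} (A B : R) (u v : \bar R) :
  (0 <= B <= A)%R -> 0 <= u <= v -> A%:E * u + B%:E * v <= B%:E * u + A%:E * v.
Proof.
move=> /andP[B0 BA] /andP[u0 uv].
have A0 : (0 <= A)%R := le_trans B0 BA.
case: v uv => [v| |] uv; last by move: (le_trans u0 uv).
  case: u u0 uv => [u| |] u0 uv //; rewrite -!EFinM -!EFinD lee_fin -subr_ge0.
  have -> : (B * u + A * v - (A * u + B * v) = (A - B) * (v - u))%R by ring.
  by apply: mulr_ge0; rewrite subr_ge0.
have [A_eq0|A_neq0] := eqVneq A 0%R.
  have B_eq0 : B = 0%R by apply/le_anti; rewrite B0 -A_eq0 BA.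
  by rewrite A_eq0 B_eq0 !mul0e.
have Bu_fin : B%:E * u != -oo.
  by apply: contraTneq (mule_ge0 (B0 : 0 <= B%:E) u0) => ->.
by rewrite [X in _ <= _ + X]muleC gt0_mulye ?lte_fin ?lt_def ?A_neq0 // addey // leey.
Qed.

Lemma ler_sqr_norm {R : realDomainType} (u v : R) :
  (u ^+ 2 <= v ^+ 2)%R = (`|u| <= `|v|)%R.
Proof. by rewrite -(real_normK (num_real u)) -(real_normK (num_real v)) ler_sqr. Qed.

Section convolution.
Context {R : realType}.
Local Notation mu := (@lebesgue_measure R).
Variable K : R -> R.
Hypothesis K_ge0 : forall v, (0 <= K v)%R.
Hypothesis K_abs_nonincreasing : {homo K : u v / (`|u| <= `|v|)%R >-> (v <= u)%R}.

Definition convolution (h : R -> \bar R) (m : R) : \bar R :=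
  \int[mu]_(x in [set: R]) ((K (x - m))%:E * h x).

Lemma kernelN v : K (- v) = K v.
Proof. by apply/le_anti; rewrite !K_abs_nonincreasing // normrN. Qed.

Lemma measurable_kernel : measurable_fun [set: R] (fun x => (K x)%:E).
Proof.
have mNK : measurable_fun [set: R] (fun x => - (K x)%:E).
  by apply: measurable_abs_nondecreasing => x y /K_abs_nonincreasing; rewrite leeN2.
rewrite (_ : (fun x => _) = (fun x => - - (K x)%:E)); first exact: measurableT_comp.
by apply/funext => x; rewrite oppeK.
Qed.

Variable h : R -> \bar R.
Hypothesis h_ge0 : forall x, 0 <= h x.
Hypothesis h_abs_nondecreasing : abs_nondecreasing h.

Let integrand_ge0 m x : 0 <= (K (x - m))%:E * h x.
Proof. by rewrite mule_ge0 ?lee_fin. Qed.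

Let measurable_integrand m : measurable_fun [set: R] (fun x => (K (x - m))%:E * h x).
Proof.
apply: emeasurable_funM; last exact: measurable_abs_nondecreasing.
by apply: measurableT_comp measurable_kernel _; exact: measurable_funB.
Qed.

Lemma convolution_ge0 m : 0 <= convolution h m.
Proof. by apply: integral_ge0 => x _. Qed.

Lemma convolutionN m : convolution h (- m) = convolution h m.
Proof.
rewrite /convolution (ge0_integral_subr _ _ _ 0) // preimage_setT.
apply: eq_integral => x _; rewrite sub0r -opprD kernelN.
by congr (_ * _); apply/le_anti; rewrite !h_abs_nondecreasing // normrN.
Qed.

Lemma convolution_le (m1 m2 : R) : (m1 <= m2)%R -> (0 <= m1 + m2)%R ->
  convolution h m1 <= convolution h m2.
Proof.
move=> le_m12 m12_ge0; apply: (ge0_le_integral_fold (m1 + m2)) => // x x_lt.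
rewrite (_ : (m1 + m2 - x - m1 = - (x - m2))%R); last by ring.
rewrite (_ : (m1 + m2 - x - m2 = - (x - m1))%R); last by ring.
rewrite !kernelN; apply: leeD_rearrange; apply/andP; split => //.
- apply: K_abs_nonincreasing; rewrite -ler_sqr_norm -subr_ge0.
  have -> : ((x - m2) ^+ 2 - (x - m1) ^+ 2 = (m2 - m1) * (m1 + m2 - 2 * x))%R by ring.
  by apply: mulr_ge0; lra.
- apply: h_abs_nondecreasing; rewrite -ler_sqr_norm -subr_ge0.
  have -> : ((m1 + m2 - x) ^+ 2 - x ^+ 2 = (m1 + m2) * (m1 + m2 - 2 * x))%R by ring.
  by apply: mulr_ge0; lra.
Qed.

Lemma convolution_abs_nondecreasing : abs_nondecreasing (convolution h).
Proof.
move=> m1 m2; wlog m2_ge0 : m2 / (0 <= m2)%R => [le_m2 m12|].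
  have [m2_ge0|m2_lt0] := leP 0%R m2; first exact: le_m2.
  by rewrite -(convolutionN m2); apply: le_m2; rewrite ?normrN // oppr_ge0 ltW.
by rewrite (ger0_norm m2_ge0) ler_norml => /andP[? ?]; apply: convolution_le; lra.
Qed.

End convolution.

Section value_iteration.
Context {R : realType}.
Variables (a sigma gamma lambda p01 p10 : R).
Hypothesis gamma_ge0 : (0 <= gamma)%R.
Hypothesis p01_01 : (0 <= p01 <= 1)%R.
Hypothesis p10_01 : (0 <= p10 <= 1)%R.

Lemma psi_ge0 v : (0 <= psi sigma v)%R.
Proof. exact/ltW/expR_gt0. Qed.

Lemma psi_abs_nonincreasing :
  {homo psi sigma : u v / (`|u| <= `|v|)%R >-> (v <= u)%R}.
Proof.
move=> u v; rewrite -ler_sqr_norm => le_uv.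
rewrite /psi ler_expR !mulNr lerN2 ler_wpM2r //.
by rewrite invr_ge0 mulr_ge0 // sqr_ge0.
Qed.

Lemma ptrans_ge0 c c' : 0 <= (ptrans p01 p10 c c')%:E.
Proof.
rewrite lee_fin; move: p01_01 p10_01 => /andP[? ?] /andP[? ?].
by case: c; case: c'; rewrite /= ?subr_ge0.
Qed.

Section step.
Variable W : R -> bool -> \bar R.
Hypothesis W_ge0 : forall x b, 0 <= W x b.
Hypothesis W_abs_nondecreasing : forall b, abs_nondecreasing (W^~ b).

Lemma expectE m c : expect sigma p01 p10 W m c =
  (ptrans p01 p10 c false)%:E * convolution (psi sigma) (W^~ false) m +
  (ptrans p01 p10 c true)%:E * convolution (psi sigma) (W^~ true) m.
Proof. by []. Qed.

Lemma expect_ge0 m c : 0 <= expect sigma p01 p10 W m c.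
Proof.
have conv_ge0 b : 0 <= convolution (psi sigma) (W^~ b) m.
  by apply: convolution_ge0 => [v|x]; [exact: psi_ge0|exact: W_ge0].
by rewrite expectE adde_ge0 ?mule_ge0 ?ptrans_ge0.
Qed.

Lemma expect_abs_nondecreasing c : abs_nondecreasing (expect sigma p01 p10 W ^~ c).
Proof.
have conv_mono b : abs_nondecreasing (convolution (psi sigma) (W^~ b)).
  apply: convolution_abs_nondecreasing => [v||x|];
    [exact: psi_ge0|exact: psi_abs_nonincreasing|exact: W_ge0|exact: W_abs_nondecreasing].
move=> m1 m2 m12; rewrite !expectE.
by apply: leeD; apply: (lee_wpmul2l (ptrans_ge0 _ _)); exact: conv_mono.
Qed.

Let scaled_expect_ge0 r m c : 0 <= (expR r)%:E * expect sigma p01 p10 W m c.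
Proof. by apply: mule_ge0; [rewrite lee_fin expR_ge0|exact: expect_ge0]. Qed.

Lemma Vstep_ge0 d c : 0 <= Vstep a sigma gamma lambda p01 p10 W d c.
Proof.
by rewrite /Vstep le_min; apply/andP; split; last case: c; exact: scaled_expect_ge0.
Qed.

Let scaled_expect_le r1 r2 m1 m2 c : (r1 <= r2)%R ->
  expect sigma p01 p10 W m1 c <= expect sigma p01 p10 W m2 c ->
  (expR r1)%:E * expect sigma p01 p10 W m1 c <= (expR r2)%:E * expect sigma p01 p10 W m2 c.
Proof.
by move=> r12 m12; apply: lee_pmul => //; [exact: expect_ge0|rewrite lee_fin ler_expR].
Qed.

Lemma Vstep_abs_nondecreasing c :
  abs_nondecreasing (Vstep a sigma gamma lambda p01 p10 W ^~ c).
Proof.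
move=> d1 d2 d12.
have le_sqr : (d1 ^+ 2 <= d2 ^+ 2)%R by rewrite ler_sqr_norm.
have le_expect : expect sigma p01 p10 W (a * d1) c <= expect sigma p01 p10 W (a * d2) c.
  by apply: expect_abs_nondecreasing; rewrite !normrM ler_wpM2l.
apply: le_min2; first by apply: scaled_expect_le => //; rewrite ler_wpM2l.
rewrite /Q1; case: c le_expect => /= le_expect; first exact: lexx.
by apply: scaled_expect_le => //; rewrite ler_wpM2l // lerD2l.
Qed.

End step.

Lemma V_ge0 t d c : 0 <= V a sigma gamma lambda p01 p10 t d c.
Proof. by elim: t d c => [|t IH] d c /=; [exact: lee01|exact: Vstep_ge0]. Qed.

Lemma V_abs_nondecreasing t c : abs_nondecreasing (V a sigma gamma lambda p01 p10 t ^~ c).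
Proof.
elim: t c => [|t IH] c; first by move=> d1 d2 _; exact: lexx.
exact: Vstep_abs_nondecreasing (V_ge0 t) IH c.
Qed.

End value_iteration.

Local Close Scope ereal_scope.

Theorem lemma3 (R : realType) (a sigma gamma lambda p01 p10 : R) (T : nat) :
  (0 < sigma) -> (0 < gamma) -> (0 < lambda) -> (1 <= T)%N ->
  (0 <= p01 <= 1) -> (0 <= p10 <= 1) ->
  forall (c : bool) (t : nat), (t <= T)%N ->
    (forall d1 d2 : R, `|d1| = `|d2| ->
       V a sigma gamma lambda p01 p10 t d1 c = V a sigma gamma lambda p01 p10 t d2 c) /\
    (forall d1 d2 : R, `|d1| <= `|d2| ->
       (V a sigma gamma lambda p01 p10 t d1 c <= V a sigma gamma lambda p01 p10 t d2 c)%E).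
Proof.
move=> _ gamma_gt0 _ _ p01_01 p10_01 c t _.
have V_mono := V_abs_nondecreasing a sigma gamma lambda p01 p10 (ltW gamma_gt0) p01_01 p10_01 t c.
split=> d1 d2 d12; last exact: V_mono.
by apply/le_anti; rewrite !V_mono ?d12.
Qed.
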